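(* Let $Z$ and $X$ be as in the context. Then $Z^{-1}=XZX$. In particular, $Z^{-1}\in\mathcal{DR}_0$.
   Context: $\mathbf N=\{1,2,\dots\}$. For $k,m\in\mathbf N$, $\alpha_k(m)$ is the number of $k$-tuples $(m_1,\dots,m_k)$ of integers $\ge2$ with $m_1\cdots m_k=m$. The divisor matrix $D=(d_{i,j})_{i,j\in\mathbf N}$ has $d_{i,j}=1$ if $i\mid j$ and $0$ otherwise. $Z=(\alpha(i,j))_{i,j\in\mathbf N}$ is the matrix whose odd-indexed rows have a single nonzero entry, equal to $1$, on the diagonal, and whose $i$-th row, for $i=2^kd$ with $d$ odd and $k\ge1$, equals the $d$-th row of $(D-I)^k$ (equivalently $\alpha(i,j)=\alpha_k(j/d)$ if $d\mid j$ and $0$ otherwise). $Z$ is upper unitriangular. $v_2(i)$ is the exponent of $2$ in $i$, and $X$ is the diagonal matrix with $(i,i)$ entry $(-1)^{v_2(i)}$. $\mathcal{DR}_0$ is the set of $\mathbf N\times\mathbf N$ complex matrices $A=(a_{i,j})$ for which there exist positive constants $C,c$ with $a_{i,j}=0$ whenever $i>Cj^c$ and $|a_{i,j}|\le Cj^c$ for all $i,j$. *)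

From HB Require Import structures.
From mathcomp Require Import all_boot all_order all_algebra.
From mathcomp Require Import all_classical all_reals all_analysis.
Set Implicit Arguments. Unset Strict Implicit. Unset Printing Implicit Defensive.
Import Order.TTheory GRing.Theory Num.Theory.
Local Open Scope ring_scope.

(* N x N matrices are functions nat -> nat -> T; only indices >= 1 matter
   (N = {1,2,...}); the values at index 0 are irrelevant. *)
Definition infmx (T : Type) := nat -> nat -> T.

(* alpha_k(m) : number of k-tuples (m_1,...,m_k) of integers >= 2 with
   m_1 * ... * m_k = m.  For m >= 1 each such m_i lies in [2, m], so we
   count tuples with entries in 'I_m.+1. *)
Definition alpha (k m : nat) : nat :=
  #|[pred t : k.-tuple 'I_m.+1 |
       all (fun x : 'I_m.+1 => 2 <= (x : nat))%N t &&
       ((\prod_(x <- t) (x : nat))%N == m)]|.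

Definition v2 (i : nat) : nat := logn 2 i.

Definition Zmx : infmx int := fun i j =>
  let k := v2 i in
  let d := (i %/ 2 ^ k)%N in
  if k == 0%N then (i == j)%:R
  else if (d %| j)%N then (alpha k (j %/ d))%:Z else 0.

Definition Xmx : infmx int := fun i j =>
  if i == j then (-1) ^+ v2 i else 0.

(* The product X Z X (X diagonal, so each entry is a single term). *)
Definition XZXmx : infmx int := fun i j => Xmx i i * Zmx i j * Xmx j j.

Definition Imx : infmx int := fun i j => (i == j)%:R.

(* C = A B as N x N matrices: for all i, j >= 1 the series
   sum_{k >= 1} a_{ik} b_{kj} converges to c_{ij}; here (integer entries)
   we require the partial sums to be eventually equal to c_{ij}, which is
   the situation for products of upper triangular matrices. *)
Definition mx_prod_is (A B C : infmx int) : Prop :=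
  forall i j : nat, (1 <= i)%N -> (1 <= j)%N ->
    exists N : nat, forall M : nat, (N <= M)%N ->
      \sum_(1 <= k < M) A i k * B k j = C i j.

(* DR_0 (for matrices with integer entries, viewed as complex matrices;
   |.| is the usual absolute value): there exist C, c > 0 with
   a_{ij} = 0 whenever i > C j^c and |a_{ij}| <= C j^c for all i, j. *)
Definition inDR0 (R : realType) (A : infmx int) : Prop :=
  exists (C c : R), 0 < C /\ 0 < c /\
    forall i j : nat, (1 <= i)%N -> (1 <= j)%N ->
      ((i%:R > C * (j%:R `^ c)) -> A i j = 0) /\
      ((`|A i j|%:~R : R) <= C * (j%:R `^ c)).

From HB Require Import structures.
From mathcomp Require Import all_boot all_order all_algebra.
From mathcomp Require Import all_classical all_reals all_analysis.
From mathcomp Require Import zify.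
Import Order.TTheory GRing.Theory Num.Theory.
Set Implicit Arguments. Unset Strict Implicit. Unset Printing Implicit Defensive.

(* Write x_m = (-1)^(v_2 m), so that X = diag(x_m), and let T be the doubling
   matrix, T(z, w) = [w = 2z].  Since alpha_(k+1)(n) is the sum of alpha_k over
   the proper divisors of n, row 2m of Z is row m of Z times D - I.  The key
   identity is D X Z = X Z (I - T): for odd n both sides of row n have the same
   divisor sums in the column index, and the identity passes from row n to row
   2n through the row recursion.  Feeding it back into the row recursion gives,
   by induction on the row index, Z X Z = X, i.e. (Z X)^2 = I, which is both
   Z (X Z X) = I and (X Z X) Z = I.  Finally X Z X lies in DR_0 because Z is
   upper triangular and alpha_k(m) <= m^2, a consequence of
   sum_(x >= 2) 1/x^2 < 1. *)

Section NatRangeSums.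
Local Open Scope ring_scope.
Variable V : nmodType.
Implicit Types (F G : nat -> V).

Lemma big_nat_widen0 b B F : (b <= B)%N -> (forall t, (b <= t)%N -> F t = 0) ->
  \sum_(0 <= t < B) F t = \sum_(0 <= t < b) F t.
Proof.
move=> bB F0; rewrite (big_cat_nat _ (n := b)) //= [X in _ + X]big1_seq ?addr0 //.
by move=> t /andP[_]; rewrite mem_index_iota => /andP[/F0].
Qed.

Lemma big_nat_dvdn c B G : (0 < c)%N ->
  \sum_(0 <= m < (c * B)%N | (c %| m)%N) G m = \sum_(0 <= u < B) G (c * u)%N.
Proof.
move=> c_gt0; elim: B => [|B IH]; first by rewrite muln0 !big_geq.
rewrite big_nat_recr //= -IH mulnS addnC (big_cat_nat _ (n := (c * B)%N)) ?leq_addr //=.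
congr (_ + _); rewrite big_ltn_cond ?dvdn_mulr ?dvdnn //=; last first.
  by rewrite -[X in (X < _)%N]addn0 ltn_add2l.
rewrite big_nat_cond big1 ?addr0 // => m /andP[/andP[lt_cB_m lt_m_cB1] /dvdnP[q def_m]].
exfalso; move: lt_cB_m lt_m_cB1.
by rewrite def_m addnC -mulnS ![(q * c)%N]mulnC !ltn_pmul2l //; lia.
Qed.

Lemma sum_divisors_dvdn c x G : (0 < c)%N ->
  \sum_(0 <= z < x | (z %| x)%N) (if (c %| z)%N then G (z %/ c)%N else 0) =
  if (c %| x)%N then \sum_(0 <= w < (x %/ c)%N | (w %| x %/ c)%N) G w else 0.
Proof.
move=> c_gt0; have [/dvdnP[q ->]|ndvd] := boolP (c %| x)%N; last first.
  by rewrite big1 // => z z_x; case: ifP => // /dvdn_trans/(_ z_x); rewrite (negPf ndvd).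
rewrite mulnK // big_mkcond /=.
rewrite (eq_bigr (fun z => if (c %| z)%N then
  (if (z %| q * c)%N then G (z %/ c)%N else 0) else 0)); last by move=> z _; do 2 case: ifP.
rewrite -big_mkcond mulnC big_nat_dvdn // [RHS]big_mkcond.
by apply: eq_bigr => w _; rewrite dvdn_pmul2l // mulKn.
Qed.

Lemma sum_proper_divisors_flip m F : (0 < m)%N ->
  \sum_(0 <= u < m | (u %| m)%N) F u = \sum_(2 <= x < m.+1 | (x %| m)%N) F (m %/ x)%N.
Proof.
move=> m_gt0; have divK d : (d %| m)%N -> (m %/ (m %/ d))%N = d.
  by move=> d_m; rewrite divnA // mulKn.
rewrite -big_filter -[RHS]big_filter -(big_map (fun x => m %/ x)%N xpredT F).
apply: perm_big; apply: uniq_perm; rewrite ?filter_uniq ?iota_uniq //.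
  rewrite map_inj_in_uniq ?filter_uniq ?iota_uniq // => x1 x2.
  rewrite !mem_filter => /andP[x1_m _] /andP[x2_m _] eq_div.
  by rewrite -(divK _ x1_m) eq_div divK.
move=> u; rewrite mem_filter mem_index_iota /=; apply/andP/mapP.
  move=> [u_m lt_u_m]; exists (m %/ u)%N; last by rewrite divK.
  have u_gt0 : (0 < u)%N by apply: dvdn_gt0 u_m.
  by rewrite mem_filter mem_index_iota dvdn_div //= ltn_divRL // mul1n lt_u_m ltnS leq_div.
move=> [x]; rewrite mem_filter mem_index_iota => /andP[x_m /andP[x_ge2 _]] ->.
by rewrite dvdn_div // ltn_Pdiv.
Qed.

Lemma big_nat1_support j M F : F 0%N = 0 -> (forall k, (j < k)%N -> F k = 0) -> (j < M)%N ->
  \sum_(1 <= k < M) F k = \sum_(0 <= k < j.+1) F k.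
Proof.
move=> F0 F_gt_j lt_jM.
by rewrite -(big_nat_widen0 (B := M)) // (big_ltn (leq_ltn_trans (leq0n j) lt_jM)) F0 add0r.
Qed.

Lemma divisor_sum_inj (U : zmodType) (F G : nat -> U) :
  (forall x, (0 < x)%N ->
     \sum_(0 <= z < x.+1 | (z %| x)%N) F z = \sum_(0 <= z < x.+1 | (z %| x)%N) G z) ->
  forall x, (0 < x)%N -> F x = G x.
Proof.
move=> eq_sums x; elim/ltn_ind: x => x IH x_gt0.
have split_last H : \sum_(0 <= z < x.+1 | (z %| x)%N) H z =
    \sum_(0 <= z < x | (z %| x)%N) H z + H x :> U.
  by rewrite big_mkcond big_nat_recr //= dvdnn -big_mkcond.
have eq_proper : \sum_(0 <= z < x | (z %| x)%N) F z = \sum_(0 <= z < x | (z %| x)%N) G z.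
  rewrite big_nat_cond [RHS]big_nat_cond; apply: eq_bigr => z /andP[/andP[_ lt_zx] z_x].
  by apply: IH; rewrite // (dvdn_gt0 x_gt0).
by move: (eq_sums x x_gt0); rewrite (split_last F) (split_last G) eq_proper => /addrI.
Qed.

Lemma sum_nat_indicator (R : pzSemiRingType) (P : pred nat) a n :
  \sum_(0 <= t < n | P t) (t == a)%:R = (P a && (a < n)%N)%:R :> R.
Proof.
rewrite (eq_bigr (fun t => if t == a then 1 else 0)) => [|t _]; last by case: (t == a).
by rewrite -big_mkcondr big_nat1_cond_eq andbC; case: (_ && _).
Qed.

Lemma sum_odd_mul_eq (R : pzRingType) n x : (0 < n)%N ->
  \sum_(0 <= t < x.+1 | odd t) (n * t == x)%:R = (n %| x)%:R - (2 * n %| x)%:R :> R.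
Proof.
move=> n_gt0; have [/dvdnP[q ->]|n_ndvd] := boolP (n %| x)%N; last first.
  have /negPf-> : ~~ (2 * n %| x)%N by apply: contra n_ndvd; apply: dvdn_trans; apply: dvdn_mull.
  rewrite subr0 big1 // => t _; case: eqP => // def_x.
  by case/negP: n_ndvd; rewrite -def_x dvdn_mulr.
under eq_bigr do rewrite [(q * n)%N]mulnC eqn_pmul2l //.
rewrite sum_nat_indicator dvdn_pmul2r // dvdn2 ltnS leq_pmulr // andbT.
by case: (odd q); rewrite ?subr0 ?subrr.
Qed.

End NatRangeSums.

Lemma proper_divisor_double_le u m : u %| m -> u < m -> 2 * u <= m.
Proof. by case/dvdnP=> [[|[|q]] ->]; lia. Qed.

(* Telescoping form of sum_(2 <= x <= n+1) 1/x^2 <= 1 - 1/(n+1). *)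
Lemma sum_sqr_div_le N n :
  n.+1 * \sum_(2 <= x < n.+2) (N %/ x) ^ 2 <= n * N ^ 2.
Proof.
elim: n => [|n IH]; first by rewrite big_geq.
rewrite big_nat_recr //=; set S := \sum_(2 <= x < n.+2) _ in IH *.
have q_sqr_le : (N %/ n.+2) ^ 2 * n.+2 ^ 2 <= N ^ 2.
  by rewrite -expnMn leq_exp2r // leq_divM.
nia.
Qed.

Lemma sum_sqr_div_le_sqr N : \sum_(2 <= x < N.+1) (N %/ x) ^ 2 <= N ^ 2.
Proof.
case: N => [|n]; first by rewrite big_geq.
have := sum_sqr_div_le n.+1 n; set S := \sum_(_ <= _ < _) _; nia.
Qed.

Lemma sum_proper_divisors_sqr_le m : \sum_(0 <= u < m | u %| m) u ^ 2 <= m ^ 2.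
Proof.
case: (posnP m) => [->|m_gt0]; first by rewrite big_geq.
rewrite (sum_proper_divisors_flip (V := nat)) //.
apply: leq_trans (sum_sqr_div_le_sqr m); rewrite [X in _ <= X](bigID (dvdn^~ m)) /=.
exact: leq_addr.
Qed.

(* [alpha k m] is [alpha_bounded k m m]; a bound N independent of m is what
   makes the recursion on the first factor possible. *)
Definition alpha_bounded (k N m : nat) : nat :=
  #|[pred t : k.-tuple 'I_N.+1 |
       all (fun x : 'I_N.+1 => 2 <= x) t && (\prod_(x <- t) x == m)]|.

Lemma alpha_bounded0 N m : alpha_bounded 0 N m = (m == 1).
Proof.
rewrite /alpha_bounded (eq_card (B := if m == 1 then predT else pred0)).
  by case: (m == 1); rewrite ?card0 // card_tuple.
by move=> t; rewrite inE tuple0 big_nil (eq_sym 1 m); case: (m == 1).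
Qed.

Lemma alpha_boundedS k N m :
  alpha_bounded k.+1 N m = \sum_(2 <= x < N.+1 | x %| m) alpha_bounded k N (m %/ x).
Proof.
rewrite /alpha_bounded -sum1_card big_mkcond /=.
rewrite (reindex (fun p : 'I_N.+1 * k.-tuple 'I_N.+1 => [tuple of p.1 :: p.2])) /=; last first.
  exists (fun t : k.+1.-tuple 'I_N.+1 => (thead t, behead_tuple t)).
    by move=> [x t] _ /=; congr pair; apply: val_inj.
  by move=> t _; rewrite [RHS]tuple_eta; apply: val_inj.
rewrite -(pair_bigA _ (fun (x : 'I_N.+1) (t : k.-tuple 'I_N.+1) =>
  if [tuple of x :: t] \in _ then 1 else 0)) /=.
rewrite big_geq_mkord [RHS]big_mkcond; apply: eq_bigr => x _.
case: (boolP (2 <= x)) => x_ge2; last first.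
  by rewrite andbF big1 // => t _; rewrite inE /= (negbTE x_ge2).
rewrite andbT; case: (boolP (x %| m)) => [/dvdnP[q ->]|x_ndvd].
  rewrite -sum1_card [RHS]big_mkcond; apply: eq_bigr => t _.
  rewrite !inE /= big_cons x_ge2 mulnK; last by lia.
  by rewrite mulnC eqn_pmul2r //; lia.
apply: big1 => t _; rewrite inE /= big_cons x_ge2 /=.
suff /negPf-> : x * \prod_(j <- t) j != m by rewrite andbF.
by apply: contra x_ndvd => /eqP <-; apply: dvdn_mulr.
Qed.

Lemma alphaE k m : alpha k m = alpha_bounded k m m.
Proof. by []. Qed.

Lemma alpha_boundedE k N m : 0 < m <= N -> alpha_bounded k N m = alpha k m.
Proof.
elim: k N m => [|k IH] N m /andP[m_gt0 le_mN]; first by rewrite alphaE !alpha_bounded0.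
rewrite alphaE !alpha_boundedS [RHS](big_nat_widen _ _ _ _ _ (_ : m.+1 <= N.+1)) //.
apply: eq_big => [x|x x_m]; first by case: (boolP (x %| m)) => // /(dvdn_leq m_gt0).
have m_div_gt0 : 0 < m %/ x by rewrite divn_gt0 ?(dvdn_gt0 m_gt0 x_m) ?(dvdn_leq m_gt0 x_m).
have m_div_le : m %/ x <= m by apply: leq_div.
by rewrite (IH N) ?(IH m) ?m_div_gt0 ?m_div_le ?(leq_trans m_div_le).
Qed.

Lemma alpha0 m : alpha 0 m = (m == 1).
Proof. exact: alpha_bounded0. Qed.

Lemma alphaS k m : alpha k.+1 m = \sum_(0 <= u < m | u %| m) alpha k u.
Proof.
have [->|m_gt0] := posnP m; first by rewrite alphaE alpha_boundedS !big_geq.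
rewrite alphaE alpha_boundedS (sum_proper_divisors_flip (V := nat)) //.
apply: eq_bigr => x x_m; rewrite alpha_boundedE // leq_div andbT.
by rewrite divn_gt0 ?(dvdn_gt0 m_gt0 x_m) ?(dvdn_leq m_gt0 x_m).
Qed.

Lemma alpha_lt_pow2 k m : m < 2 ^ k -> alpha k m = 0.
Proof.
elim: k m => [|k IH] m lt_m_pow; first by rewrite alpha0; case: m lt_m_pow.
rewrite alphaS big_nat_cond big1 // => u /andP[/andP[_ lt_um] u_m].
apply: IH; rewrite -(ltn_pmul2l (isT : 0 < 2)).
by apply: leq_ltn_trans (proper_divisor_double_le u_m lt_um) _; rewrite -expnS.
Qed.

Lemma alpha_le_sqr k m : alpha k m <= m ^ 2.
Proof.
elim: k m => [|k IH] m; first by rewrite alpha0; case: m => [|[|m]].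
rewrite alphaS; apply: leq_trans (sum_proper_divisors_sqr_le m).
by apply: leq_sum => u _; apply: IH.
Qed.

Definition oddpart m := m %/ 2 ^ v2 m.

Lemma oddpartE m : 0 < m -> 2 ^ v2 m * oddpart m = m.
Proof. by move=> m_gt0; rewrite mulnC divnK // pfactor_dvdnn. Qed.

Lemma oddpart_gt0 m : 0 < m -> 0 < oddpart m.
Proof. by move=> m_gt0; move: (m_gt0); rewrite -{1}(oddpartE m_gt0) muln_gt0 => /andP[]. Qed.

Lemma v2_odd m : odd m -> v2 m = 0.
Proof. by move=> m_odd; rewrite /v2 logn_coprime // coprime2n. Qed.

Lemma v2_double m : 0 < m -> v2 (2 * m) = (v2 m).+1.
Proof. by move=> m_gt0; rewrite /v2 lognM // logn_prime. Qed.

Lemma oddpart_double m : 0 < m -> oddpart (2 * m) = oddpart m.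
Proof. by move=> m_gt0; rewrite /oddpart v2_double // expnS divnMl. Qed.

Local Open Scope ring_scope.

Lemma Zmx_alpha m y : (0 < m)%N ->
  Zmx m y = if (oddpart m %| y)%N then (alpha (v2 m) (y %/ oddpart m))%:Z else 0.
Proof.
move=> m_gt0; rewrite /Zmx -/(oddpart m); case: eqP => [v2m0|//].
have -> : oddpart m = m by rewrite /oddpart v2m0 divn1.
rewrite v2m0 alpha0; case: ifP => [/dvdnP[q ->]|/negbT m_ndvd].
  by rewrite mulnK // -{1}[m]mul1n eqn_pmul2r // (eq_sym 1%N); case: (q == 1%N).
by case: eqP m_ndvd => // <-; rewrite dvdnn.
Qed.

Lemma Zmx_odd m y : odd m -> Zmx m y = (m == y)%:R.
Proof. by move=> m_odd; rewrite /Zmx /= v2_odd. Qed.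

Lemma Zmx0 y : (0 < y)%N -> Zmx 0 y = 0.
Proof. by case: y. Qed.

Lemma Zmx_lt m y : (y < m)%N -> Zmx m y = 0.
Proof.
move=> lt_ym; have m_gt0 : (0 < m)%N by case: m lt_ym.
rewrite Zmx_alpha //; case: ifP => // _; rewrite alpha_lt_pow2 //.
by rewrite ltn_divLR ?oddpart_gt0 // oddpartE.
Qed.

(* The hypothesis only excludes the junk entry [Zmx 0 0 = 1]. *)
Lemma Zmx_double m y : ((0 < m) || (0 < y))%N ->
  Zmx (2 * m)%N y = \sum_(0 <= z < y | (z %| y)%N) Zmx m z.
Proof.
case: (posnP m) => [-> /= y_gt0|m_gt0 _].
  rewrite muln0 Zmx0 // big1 // => z z_y.
  by rewrite Zmx0 // (dvdn_gt0 y_gt0 z_y).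
rewrite Zmx_alpha ?muln_gt0 // oddpart_double // v2_double // alphaS.
under [RHS]eq_bigr => z _ do rewrite Zmx_alpha //.
rewrite (sum_divisors_dvdn _ (fun w => (alpha (v2 m) w)%:Z)) ?oddpart_gt0 //.
by case: ifP => // _; rewrite (big_morph Posz PoszD (erefl (0 : int))).
Qed.

Lemma Zmx_abs_le m y : (0 < m)%N -> `|Zmx m y| <= (y ^ 2)%:Z.
Proof.
move=> m_gt0; rewrite Zmx_alpha //; case: ifP => _; last by rewrite normr0.
rewrite ger0_norm // lez_nat; apply: leq_trans (alpha_le_sqr _ _) _.
by rewrite leq_exp2r // leq_div.
Qed.

Definition xsign (m : nat) : int := (-1) ^+ v2 m.

Lemma Xmx_diag m : Xmx m m = xsign m.
Proof. by rewrite /Xmx eqxx. Qed.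

Lemma xsign_odd m : odd m -> xsign m = 1.
Proof. by move=> m_odd; rewrite /xsign v2_odd. Qed.

Lemma xsignM a b : (0 < a)%N -> (0 < b)%N -> xsign (a * b) = xsign a * xsign b.
Proof. by move=> a_gt0 b_gt0; rewrite /xsign /v2 lognM // exprD. Qed.

Lemma xsign_double m : (0 < m)%N -> xsign (2 * m) = - xsign m.
Proof. by move=> m_gt0; rewrite xsignM // mulN1r. Qed.

Lemma xsign_sqr m : xsign m * xsign m = 1.
Proof. by rewrite /xsign -exprD addnn -mul2n exprM sqrrN expr1n. Qed.

(* [x_n * zsum n x] is the (n, x) entry of D X Z, and [zsumE] below is the
   identity D X Z = X Z (I - T). *)
Definition zsum (n x : nat) : int := \sum_(0 <= t < x.+1) xsign t * Zmx (n * t)%N x.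

Lemma zsum_widen n x b : (0 < n)%N -> (x < b)%N ->
  \sum_(0 <= t < b) xsign t * Zmx (n * t)%N x = zsum n x.
Proof.
move=> n_gt0 lt_xb; apply: big_nat_widen0 => // t lt_xt.
by rewrite Zmx_lt ?mulr0 // (leq_trans lt_xt) ?leq_pmull.
Qed.

Lemma zsum_double n x : (0 < n)%N -> (0 < x)%N ->
  zsum (2 * n) x = \sum_(0 <= z < x | (z %| x)%N) zsum n z.
Proof.
move=> n_gt0 x_gt0; rewrite /zsum.
under eq_bigr => t _ do rewrite -mulnA Zmx_double ?x_gt0 ?orbT // mulr_sumr.
rewrite exchange_big_nat /=; apply: eq_bigr => z z_x.
by rewrite zsum_widen // ltnS dvdn_leq.
Qed.

Lemma zsum_add_double n x : (0 < n)%N -> (0 < x)%N ->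
  zsum n x + zsum (2 * n) x = \sum_(0 <= t < x.+1 | odd t) Zmx (n * t)%N x.
Proof.
move=> n_gt0 x_gt0.
have even_part : \sum_(0 <= t < x.+1 | ~~ odd t) xsign t * Zmx (n * t)%N x = - zsum (2 * n) x.
  rewrite /zsum -sumrN.
  transitivity (\sum_(0 <= t < (2 * x.+1)%N | (2 %| t)%N) xsign t * Zmx (n * t)%N x).
    rewrite big_mkcond [RHS]big_mkcond [RHS](big_nat_widen0 (b := x.+1)) ?leq_pmull //.
      by apply: eq_bigr => t _; rewrite dvdn2.
    move=> t lt_xt; case: ifP => // _.
    by rewrite Zmx_lt ?mulr0 // (leq_trans lt_xt) ?leq_pmull.
  rewrite big_nat_dvdn //; apply: eq_bigr => [[|u] _].
    by rewrite !muln0 Zmx0 // !mulr0 oppr0.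
  by rewrite xsign_double // mulNr mulnA [(n * 2)%N]mulnC.
rewrite {1}/zsum (bigID odd) /= even_part addrNK.
by apply: eq_bigr => t t_odd; rewrite xsign_odd // mul1r.
Qed.

Lemma zsum_odd n x : (0 < n)%N -> odd n -> (0 < x)%N ->
  zsum n x = (n == x)%:R - ((2 * n)%N == x)%:R.
Proof.
move=> n_gt0 n_odd; move: x; apply: divisor_sum_inj => x x_gt0.
rewrite sumrB; under [X in _ = X - _]eq_bigr do rewrite eq_sym.
under [X in _ = _ - X]eq_bigr do rewrite eq_sym.
rewrite !sum_nat_indicator !ltnS !(andb_idr (dvdn_leq x_gt0)) -sum_odd_mul_eq //.
rewrite big_mkcond big_nat_recr //= dvdnn -big_mkcond -zsum_double // addrC.
rewrite zsum_add_double //; apply: eq_bigr => t t_odd.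
by rewrite Zmx_odd // oddM n_odd.
Qed.

Lemma zsumE n x : (0 < n)%N -> (0 < x)%N ->
  zsum n x = Zmx n x - (if (2 %| x)%N then Zmx n (x %/ 2)%N else 0).
Proof.
elim/ltn_ind: n x => n IH x n_gt0 x_gt0.
have [n_odd|n_even] := boolP (odd n).
  rewrite zsum_odd // !Zmx_odd //; congr (_ - _).
  have [/dvdnP[q ->]|x_odd] := boolP (2 %| x)%N.
    by rewrite mulnK // [(q * 2)%N]mulnC eqn_pmul2l.
  by case: eqP x_odd => // <-; rewrite dvdn_mulr.
have def_n : n = (2 * n./2)%N by rewrite mul2n even_halfK.
have half_gt0 : (0 < n./2)%N by lia.
have half_lt : (n./2 < n)%N by lia.
rewrite def_n zsum_double //.
rewrite (eq_bigr (fun z =>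
    Zmx n./2 z - (if (2 %| z)%N then Zmx n./2 (z %/ 2)%N else 0))); last first.
  by move=> z z_x; rewrite IH ?(dvdn_gt0 x_gt0 z_x).
rewrite sumrB -Zmx_double ?half_gt0 // sum_divisors_dvdn //.
by case: ifP => // /dvdnP[q def_x]; rewrite -Zmx_double // half_gt0.
Qed.

Lemma sum_proper_multiples z j : (0 < z)%N -> (0 < j)%N ->
  \sum_(0 <= m < j.+1 | ((z %| m) && (z < m))%N) xsign m * Zmx m j =
  - (xsign z * (if (2 %| j)%N then Zmx z (j %/ 2)%N else 0)).
Proof.
move=> z_gt0 j_gt0.
transitivity (\sum_(0 <= m < (z * j.+1)%N | (z %| m)%N)
               (if (z < m)%N then xsign m * Zmx m j else 0)).
  rewrite big_mkcondr big_mkcond [RHS]big_mkcond [RHS](big_nat_widen0 (b := j.+1)) ?leq_pmull //.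
  move=> m lt_jm; case: ifP => // _; case: ifP => // _.
  by rewrite Zmx_lt ?mulr0.
have tail : \sum_(2 <= t < j.+1) xsign t * Zmx (z * t)%N j =
    - (if (2 %| j)%N then Zmx z (j %/ 2)%N else 0).
  have := zsumE z_gt0 j_gt0; rewrite /zsum big_ltn // big_ltn //=.
  rewrite muln0 muln1 Zmx0 // mulr0 add0r xsign_odd // mul1r.
  by move/(canRL (addKr _))->; rewrite addKr.
rewrite big_nat_dvdn // big_ltn // big_ltn // muln0 muln1 ltnn ltn0 !add0r -mulrN -tail mulr_sumr.
apply: eq_big_nat => t /andP[lt_1t _].
by rewrite -[X in (X < _)%N]muln1 ltn_pmul2l // lt_1t xsignM ?mulrA //; lia.
Qed.

(* The (i, j) entry of Z X Z; Z is upper triangular, so only m <= j contributes. *)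
Definition ZXZmx (i j : nat) : int := \sum_(0 <= m < j.+1) Zmx i m * xsign m * Zmx m j.

Lemma ZXZmx_double h j : (0 < h)%N -> (0 < j)%N ->
  ZXZmx (2 * h)%N j = - (if (2 %| j)%N then ZXZmx h (j %/ 2)%N else 0).
Proof.
move=> h_gt0 j_gt0; rewrite /ZXZmx.
under eq_bigr => m _ do rewrite Zmx_double ?h_gt0 // -mulrA mulr_suml.
rewrite (eq_big_nat _ _ (F2 := fun m => \sum_(0 <= z < j.+1)
    if ((z %| m) && (z < m))%N then Zmx h z * (xsign m * Zmx m j) else 0)); last first.
  by move=> m /andP[_ lt_mj]; rewrite (big_nat_widen _ _ _ _ _ (ltnW lt_mj)) big_mkcond.
rewrite exchange_big_nat /=.
under eq_bigr => z _ do rewrite -big_mkcond -mulr_sumr.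
rewrite (eq_bigr (fun z => - (Zmx h z * xsign z *
    (if (2 %| j)%N then Zmx z (j %/ 2)%N else 0)))); last first.
  move=> [|z] _; first by rewrite Zmx_lt // !mul0r oppr0.
  by rewrite sum_proper_multiples // mulrN mulrA.
rewrite sumrN; case: ifP => [/dvdnP[q def_j]|_]; last first.
  by rewrite big1 // => z _; rewrite mulr0.
rewrite def_j mulnK // (big_nat_widen0 (b := q.+1)) ?ltnS ?leq_pmulr //; last first.
  by move=> z lt_qz; rewrite (Zmx_lt lt_qz) mulr0.
Qed.

Lemma ZXZ_eq_X i j : (0 < i)%N -> (0 < j)%N -> ZXZmx i j = (i == j)%:R * xsign i.
Proof.
elim/ltn_ind: i j => i IH j i_gt0 j_gt0.
have [i_odd|i_even] := boolP (odd i).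
  rewrite /ZXZmx (eq_bigr (fun m => (m == i)%:R * (xsign i * Zmx i j))) => [|m _]; last first.
    by rewrite Zmx_odd // eq_sym; case: eqP => [->|]; rewrite ?mul0r ?mul1r.
  rewrite -mulr_suml sum_nat_indicator ltnS Zmx_odd //.
  by case: eqP => [<-|]; rewrite ?leqnn ?mulr1 ?mulr0 ?mul0r.
have def_i : i = (2 * i./2)%N by rewrite mul2n even_halfK.
have half_gt0 : (0 < i./2)%N by lia.
rewrite def_i ZXZmx_double // xsign_double //.
have [/dvdnP[q def_j]|j_odd] := boolP (2 %| j)%N.
  have q_gt0 : (0 < q)%N by lia.
  rewrite def_j mulnK // IH //; last by lia.
  by rewrite [(q * 2)%N]mulnC eqn_pmul2l // mulrN.
suff /negPf-> : (2 * i./2)%N != j by rewrite oppr0 mul0r.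
by apply: contraNneq j_odd => <-; apply: dvdn_mulr.
Qed.

Lemma XZXmxE i j : XZXmx i j = xsign i * Zmx i j * xsign j.
Proof. by rewrite /XZXmx !Xmx_diag. Qed.

Lemma Zmx_XZXmx : mx_prod_is Zmx XZXmx Imx.
Proof.
move=> i j i_gt0 j_gt0; exists j.+1 => M lt_jM.
rewrite (big_nat1_support _ _ lt_jM); first last.
- by move=> k lt_jk; rewrite XZXmxE (Zmx_lt lt_jk) mulr0 mul0r mulr0.
- by rewrite Zmx_lt // mul0r.
under eq_bigr do rewrite XZXmxE !mulrA.
rewrite -mulr_suml -/(ZXZmx i j) ZXZ_eq_X // /Imx -mulrA.
by case: eqP => [->|_]; rewrite ?xsign_sqr ?mul0r.
Qed.

Lemma XZXmx_Zmx : mx_prod_is XZXmx Zmx Imx.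
Proof.
move=> i j i_gt0 j_gt0; exists j.+1 => M lt_jM.
rewrite (big_nat1_support _ _ lt_jM); first last.
- by move=> k lt_jk; rewrite (Zmx_lt lt_jk) mulr0.
- by rewrite Zmx0 // mulr0.
under eq_bigr do rewrite XZXmxE -!mulrA.
rewrite -mulr_sumr.
under eq_bigr do rewrite !mulrA.
rewrite -/(ZXZmx i j) ZXZ_eq_X // /Imx mulrCA.
by case: eqP => [->|_]; rewrite ?xsign_sqr ?mulr0 ?mulr1.
Qed.

Lemma XZXmx_in_DR0 (R : realType) : inDR0 R XZXmx.
Proof.
exists 1, 2; do 2!split => //.
move=> i j i_gt0 j_gt0.
have -> : (j%:R `^ 2 : R) = (j ^ 2)%:R by rewrite -[2 in LHS]/(2%:R) powR_mulrn // natrX.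
rewrite mul1r; split.
  rewrite ltr_nat => lt_sqr_i; rewrite XZXmxE Zmx_lt ?mulr0 ?mul0r //.
  by rewrite (leq_ltn_trans _ lt_sqr_i) // -mulnn leq_pmulr.
rewrite XZXmxE !normrM /xsign !normr_sign mul1r mulr1.
by rewrite -[(j ^ 2)%:R]/(((j ^ 2)%:Z)%:~R : R) ler_int Zmx_abs_le.
Qed.

Theorem theorem4p6 (R : realType) :
  mx_prod_is Zmx XZXmx Imx /\ mx_prod_is XZXmx Zmx Imx /\ inDR0 R XZXmx.
Proof. by split; [exact: Zmx_XZXmx | split; [exact: XZXmx_Zmx | exact: XZXmx_in_DR0]]. Qed.
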